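(* The class of finite fields is strongly $\log$-compressible via $\Sigma_3$-formulas in the ring language $L(+,\times,0,1)$: for each $k$ there is $c_k$ such that for every finite field $\mathbb F_q$ and every $\bar a\in\mathbb F_q^k$ there is a $\Sigma_3$-formula $\phi(y_1,\dots,y_k)$ with $|\phi|\le c_k\log q$ describing $(\mathbb F_q,\bar a)$.
   Context: A formula $\phi(y_1,\dots,y_k)$ describes $(M,\bar a)$ if $(M,\bar a)$ is, up to isomorphism, the unique structure with a distinguished $k$-tuple satisfying $\phi$. The length $|\phi|$ of a formula is its number of symbols, each variable counting as a single symbol. A $\Sigma_r$-formula is in prenex normal form, its quantifier prefix starting with an existential quantifier and having $r-1$ quantifier alternations. Here $\log m=\min\{r\in\mathbb N: 2^r\ge m\}$. *)

From HB Require Import structures.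
From mathcomp Require Import all_boot all_order all_algebra all_field.
Import GRing.Theory.
Set Implicit Arguments. Unset Strict Implicit. Unset Printing Implicit Defensive.

Inductive lterm : Type :=
| TVar : nat -> lterm
| TZero : lterm
| TOne : lterm
| TAdd : lterm -> lterm -> lterm
| TMul : lterm -> lterm -> lterm.

Inductive lform : Type :=
| FEq : lterm -> lterm -> lform
| FNot : lform -> lform
| FAnd : lform -> lform -> lform
| FOr : lform -> lform -> lform
| FEx : nat -> lform -> lform
| FAll : nat -> lform -> lform.

(* Length = number of symbols; every variable counts as one symbol.
   (Parentheses are not counted; this changes lengths only by a constant factor.) *)
Fixpoint tlen (t : lterm) : nat :=
  match t with
  | TVar _ | TZero | TOne => 1
  | TAdd t1 t2 | TMul t1 t2 => (1 + tlen t1 + tlen t2)%N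
  end.

Fixpoint flen (f : lform) : nat :=
  match f with
  | FEq t1 t2 => (1 + tlen t1 + tlen t2)%N
  | FNot g => (1 + flen g)%N
  | FAnd g h | FOr g h => (1 + flen g + flen h)%N
  | FEx _ g | FAll _ g => (2 + flen g)%N
  end.

Fixpoint tvars (t : lterm) : seq nat :=
  match t with
  | TVar n => [:: n]
  | TZero | TOne => [::]
  | TAdd t1 t2 | TMul t1 t2 => tvars t1 ++ tvars t2
  end.

Fixpoint fvars (f : lform) : seq nat :=
  match f with
  | FEq t1 t2 => tvars t1 ++ tvars t2
  | FNot g => fvars g
  | FAnd g h | FOr g h => fvars g ++ fvars h
  | FEx x g | FAll x g => filter (fun y => y != x) (fvars g)
  end.

Fixpoint qfree (f : lform) : bool :=
  match f with
  | FEq _ _ => true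
  | FNot g => qfree g
  | FAnd g h | FOr g h => qfree g && qfree h
  | FEx _ _ | FAll _ _ => false
  end.

Fixpoint qprefix (f : lform) : seq bool :=
  match f with
  | FEx _ g => true :: qprefix g
  | FAll _ g => false :: qprefix g
  | _ => [::]
  end.

Fixpoint qmatrix (f : lform) : lform :=
  match f with
  | FEx _ g | FAll _ g => qmatrix g
  | _ => f
  end.

Fixpoint alternations (s : seq bool) : nat :=
  match s with
  | b :: ((c :: _) as s') => ((b != c) + alternations s')%N
  | _ => 0
  end.

Definition is_sigma (r : nat) (f : lform) : bool :=
  [&& qfree (qmatrix f), head false (qprefix f), 0 < r
    & alternations (qprefix f) == r.-1].

Record Lstr : Type := LStr {
  carrier :> Type;
  szero : carrier;
  sone : carrier;
  sadd : carrier -> carrier -> carrier;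
  smul : carrier -> carrier -> carrier }.

Fixpoint teval (M : Lstr) (e : nat -> M) (t : lterm) : M :=
  match t with
  | TVar n => e n
  | TZero => szero M
  | TOne => sone M
  | TAdd t1 t2 => sadd (teval e t1) (teval e t2)
  | TMul t1 t2 => smul (teval e t1) (teval e t2)
  end.

Definition upd (M : Type) (e : nat -> M) (x : nat) (m : M) : nat -> M :=
  fun y => if y == x then m else e y.

Fixpoint holds (M : Lstr) (e : nat -> M) (f : lform) : Prop :=
  match f with
  | FEq t1 t2 => teval e t1 = teval e t2
  | FNot g => ~ holds e g
  | FAnd g h => holds e g /\ holds e h
  | FOr g h => holds e g \/ holds e h
  | FEx x g => exists m : M, holds (upd e x m) g
  | FAll x g => forall m : M, holds (upd e x m) g
  end.

(* (M, a) |= phi(y_1..y_k), the variable y_(i+1) being variable number i. *)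
Definition sat (M : Lstr) (k : nat) (a : 'I_k -> M) (f : lform) : Prop :=
  forall e : nat -> M, (forall i : 'I_k, e i = a i) -> holds e f.

Definition iso_tuple (M N : Lstr) (k : nat) (a : 'I_k -> M) (b : 'I_k -> N) : Prop :=
  exists (h : M -> N) (g : N -> M),
    [/\ cancel h g, cancel g h,
        h (szero M) = szero N, h (sone M) = sone N &
        [/\ (forall x y, h (sadd x y) = sadd (h x) (h y)),
             (forall x y, h (smul x y) = smul (h x) (h y))
           & (forall i, h (a i) = b i)]].

Definition describes (M : Lstr) (k : nat) (a : 'I_k -> M) (f : lform) : Prop :=
  all (fun x => x < k) (fvars f) /\
  sat a f /\
  forall (N : Lstr) (b : 'I_k -> N), sat b f -> iso_tuple a b.

Definition field_str (F : finFieldType) : Lstr :=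
  @LStr F 0%R 1%R (@GRing.add F) (@GRing.mul F).

(* log m = min { r : 2^r >= m } *)
Definition log2up (m : nat) : nat := up_log 2 m.

From HB Require Import structures.
From mathcomp Require Import all_boot all_order all_algebra all_field all_fingroup all_solvable.
From mathcomp Require Import boolp zify.
Set Implicit Arguments. Unset Strict Implicit. Unset Printing Implicit Defensive.
Import Order.TTheory GRing.Theory Num.Theory.
Open Scope ring_scope.

(* A finite field F of characteristic p is Z[X]/(p, m) for a monic m of some
   degree d, with |F| = p^d; the image g of X generates F as a ring.  The
   describing formula says: there is g with p = 0 and m(g) = 0 such that for
   all x, y, z the commutative ring axioms hold at x, y, z, and x is a
   polynomial of degree < d in g whose coefficients are written in binary with
   W = O(log p) existentially quantified bits; each a_j is given as such a
   polynomial with explicit coefficients.  A model is thus a nontrivial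
   commutative ring of characteristic p generated by a root of m, hence a
   quotient of Z[X]/(p, m) = F, hence isomorphic to F since F is a field.
   The prefix is exists g, forall x y z, exists bits: a Sigma_3 formula, of
   length O(k d W) = O(k log |F|). *)

(** * Integer polynomials *)

Section IntPolyEval.
Variable R : comNzRingType.
Implicit Types (x : R) (P Q : {poly int}).

Definition zeval x P : R := (map_poly intr P).[x].

Lemma zevalD x P Q : zeval x (P + Q) = zeval x P + zeval x Q.
Proof. by rewrite /zeval rmorphD hornerD. Qed.

Lemma zevalB x P Q : zeval x (P - Q) = zeval x P - zeval x Q.
Proof. by rewrite /zeval rmorphB hornerD hornerN. Qed.

Lemma zevalM x P Q : zeval x (P * Q) = zeval x P * zeval x Q.
Proof. by rewrite /zeval rmorphM hornerM. Qed.

Lemma zeval1 x : zeval x 1 = 1.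
Proof. by rewrite /zeval rmorph1 hornerC. Qed.

Lemma zevalX x : zeval x 'X = x.
Proof. by rewrite /zeval map_polyX hornerX. Qed.

Lemma zevalXn x n : zeval x 'X^n = x ^+ n.
Proof. by rewrite /zeval map_polyXn hornerXn. Qed.

Lemma zevalZ x c P : zeval x (c *: P) = c%:~R * zeval x P.
Proof. by rewrite -mul_polyC zevalM /zeval map_polyC hornerC. Qed.

Lemma zeval_sum x P n :
  (size P <= n)%N -> zeval x P = \sum_(i < n) (P`_i)%:~R * x ^+ i.
Proof.
move=> szP; rewrite /zeval (horner_coef_wide _ (n := n)); last first.
  by rewrite map_polyE (leq_trans (size_Poly _)) ?size_map.
by apply: eq_bigr => i _; rewrite coef_map.
Qed.

Lemma intr_dvdz_eq0 (p : nat) (c : int) :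
  p%:R = 0 :> R -> (p%:Z %| c)%Z -> c%:~R = 0 :> R.
Proof. by move=> p0 /dvdzP [q ->]; rewrite intrM -[(p%:Z)%:~R]/(p%:R : R) p0 mulr0. Qed.

Lemma zeval_dvdz_eq0 (p : nat) x P :
  p%:R = 0 :> R -> (forall i, (p%:Z %| P`_i)%Z) -> zeval x P = 0.
Proof.
move=> p0 dvdP; rewrite (zeval_sum x (leqnn _)) big1 // => i _.
by rewrite (intr_dvdz_eq0 p0 (dvdP i)) mul0r.
Qed.

End IntPolyEval.

Lemma monic_coef_size (S : {poly int}) j :
  (forall i, (j < i)%N -> S`_i = 0) -> S`_j = 1 -> S \is monic /\ size S = j.+1.
Proof.
move=> S_gt S_j; have szS : size S = j.+1.
  apply/eqP; rewrite eqn_leq; apply/andP; split; first exact/leq_sizeP.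
  by rewrite ltnNge; apply/negP => /leq_sizeP /(_ j (leqnn _)); rewrite S_j.
by rewrite monicE lead_coefE szS S_j.
Qed.

Lemma dvdz_small_eq (p a b : nat) :
  (a < p)%N -> (b < p)%N -> (p%:Z %| a%:Z - b%:Z)%Z -> a = b.
Proof.
wlog le_ab : a b / (a <= b)%N => [hwlog|] a_lt b_lt.
  case: (leqP a b) => [le_ab|/ltnW le_ba]; first exact: hwlog.
  by rewrite -rpredN opprB => /hwlog -> //.
rewrite dvdzE distnEr // => p_ba; apply/eqP.
by rewrite eq_sym -(modn_small a_lt) -(modn_small b_lt) eqn_mod_dvd.
Qed.

Definition nat_poly (cs : seq nat) : {poly int} := \poly_(i < size cs) (nth 0%N cs i)%:Z.

Lemma zeval_nat_poly (R : comNzRingType) (x : R) cs :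
  zeval x (nat_poly cs) = \sum_(i < size cs) (nth 0%N cs i)%:R * x ^+ i.
Proof.
by rewrite (zeval_sum x (size_poly _ _)); apply: eq_bigr => i _; rewrite coef_poly ltn_ord.
Qed.

Lemma nat_poly_absz (Q : {poly int}) n : (size Q <= n)%N -> (forall i, 0 <= Q`_i) ->
  nat_poly (mkseq (fun i => absz Q`_i) n) = Q.
Proof.
move=> szQ Q_ge0; apply/polyP => i; rewrite coef_poly size_mkseq.
case: ltnP => [lt_i_n|le_n_i]; first by rewrite nth_mkseq // gez0_abs.
by rewrite (leq_sizeP _ _ (leq_trans szQ le_n_i)).
Qed.

Definition poly_modz (p : nat) (P : {poly int}) : {poly int} :=
  \poly_(i < size P) (P`_i %% p%:Z)%Z.

Section PolyModz.
Variables (p : nat) (P : {poly int}).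

Lemma coef_poly_modz i :
  (poly_modz p P)`_i = if (i < size P)%N then (P`_i %% p%:Z)%Z else 0.
Proof. by rewrite coef_poly. Qed.

Lemma size_poly_modz : (size (poly_modz p P) <= size P)%N.
Proof. exact: size_poly. Qed.

Lemma poly_modz_dvdz i : (p%:Z %| P`_i - (poly_modz p P)`_i)%Z.
Proof.
rewrite coef_poly_modz; case: ltnP => [_|szP]; last by rewrite (leq_sizeP _ _ szP) ?subrr.
by rewrite -eqz_mod_dvd modz_mod.
Qed.

Lemma poly_modz_coef_range i : (0 < p)%N ->
  (0 <= (poly_modz p P)`_i) && ((poly_modz p P)`_i < p%:Z).
Proof.
move=> p_gt0; rewrite coef_poly_modz; case: ifP => _; last by rewrite lexx ltz_nat.
by rewrite modz_ge0 ?ltz_pmod ?ltz_nat // eqz_nat -lt0n.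
Qed.

Lemma zeval_poly_modz (R : comNzRingType) (x : R) :
  p%:R = 0 :> R -> zeval x (poly_modz p P) = zeval x P.
Proof.
move=> p0; apply/eqP; rewrite eq_sym -subr_eq0 -zevalB; apply/eqP.
by apply: (zeval_dvdz_eq0 _ p0) => i; rewrite coefB poly_modz_dvdz.
Qed.

Lemma poly_modz_monic : (1 < p)%N -> P \is monic ->
  poly_modz p P \is monic /\ size (poly_modz p P) = size P.
Proof.
move=> p_gt1 monP; have szP : size P = (size P).-1.+1 by rewrite prednK ?size_poly_gt0 ?monic_neq0.
rewrite [in RHS]szP; apply: monic_coef_size => [i|].
  by move=> lt_i; rewrite coef_poly_modz ifF // szP ltnS leqNgt lt_i.
rewrite coef_poly_modz {2}szP ltnSn.
by move: monP; rewrite monicE lead_coefE => /eqP ->; rewrite modz_small // ltz_nat.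
Qed.

End PolyModz.

Section MinimalMonic.
Variables (R : comNzRingType) (p : nat) (g : R) (d : nat).
Hypotheses (p_prime : prime p) (pchar : p%:R = 0 :> R).
Hypothesis min_monic : forall S : {poly int}, S \is monic -> zeval g S = 0 -> (d < size S)%N.

(* If some vanishing polynomial of size at most d had a coefficient prime to p,
   scaling by its inverse mod p would produce a vanishing monic one. *)
Lemma zeval_eq0_dvdz (Q : {poly int}) :
  (size Q <= d)%N -> zeval g Q = 0 -> forall i, (p%:Z %| Q`_i)%Z.
Proof.
move: Q; suff IH j : (j <= d)%N -> forall Q : {poly int}, (size Q <= j)%N ->
    zeval g Q = 0 -> forall i, (p%:Z %| Q`_i)%Z by exact: IH.
elim: j => [_ Q /size_poly_leq0P -> _ i|j IH j_le_d Q szQ Q0 i]; first by rewrite coef0 dvdz0.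
have Q_gt i0 : (j < i0)%N -> Q`_i0 = 0 by apply: (leq_sizeP _ _ szQ).
set c := Q`_j; have [p_c|p'c] := boolP (p%:Z %| c)%Z.
  set Q' := Q - c *: 'X^j.
  have szQ' : (size Q' <= j)%N.
    apply/leq_sizeP => i0; rewrite leq_eqVlt => /orP [/eqP <-|lt_j_i0].
      by rewrite coefB coefZ coefXn eqxx mulr1 subrr.
    by rewrite coefB coefZ coefXn Q_gt // gtn_eqF // mulr0 subrr.
  have Q'0 : zeval g Q' = 0.
    by rewrite zevalB zevalZ zevalXn Q0 (intr_dvdz_eq0 pchar p_c) mul0r subrr.
  have := IH (ltnW j_le_d) Q' szQ' Q'0 i.
  rewrite coefB coefZ coefXn => p_Q'i; rewrite -(subrK (c * (i == j)%:R) Q`_i).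
  by apply: rpredD => //; case: (i == j); rewrite ?mulr1 ?mulr0 ?dvdz0.
exfalso; have /coprimezP [[u v] /= uv] : coprimez p c.
  by rewrite coprimezE /= prime_coprime.
set S := v *: Q - (v * c - 1) *: 'X^j.
have [monS szS] : S \is monic /\ size S = j.+1.
  apply: monic_coef_size => [i0 lt_j_i0|].
    by rewrite coefB !coefZ coefXn Q_gt // gtn_eqF // !mulr0 subrr.
  by rewrite coefB !coefZ coefXn eqxx mulr1 -/c opprB addrC subrK.
have S0 : zeval g S = 0.
  rewrite zevalB !zevalZ Q0 mulr0 sub0r zevalXn (@intr_dvdz_eq0 _ p) ?mul0r ?oppr0 //.
  have -> : v * c - 1 = - (u * p%:Z) by rewrite -uv opprD addrCA subrr addr0.
  by rewrite rpredN dvdz_mull.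
by have := min_monic monS S0; rewrite szS ltnNge j_le_d.
Qed.

End MinimalMonic.

(** * Presentations of finite fields *)

Lemma finField_zeval_generator (F : finFieldType) :
  exists g : F, forall x : F, exists P, zeval g P = x.
Proof.
have /cyclicP [u gen_u] := field_unit_group_cyclic [set: {unit F}]%G.
exists (val u) => x; have [->|x_neq0] := eqVneq x 0.
  by exists 0; rewrite /zeval map_poly0 horner0.
have ux : x \is a GRing.unit by rewrite unitfE.
have : (Sub x ux : {unit F}) \in <[u]>%g by rewrite -gen_u inE.
by case/cycleP => i ui; exists 'X^i; rewrite zevalXn -FinRing.val_unitX -ui.
Qed.

(* F presented as Z[X]/(p, m) with X mapped to g: the root g of the monic m
   of degree d generates F as a ring, and no nonzero polynomial of degree < d
   over Z/p vanishes at g. *)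
Record zpres (F : finFieldType) := ZPres {
  zp_char : nat;
  zp_deg : nat;
  zp_gen : F;
  zp_min : {poly int};
  zp_char_prime : prime zp_char;
  zp_charE : zp_char%:R = 0 :> F;
  zp_min_monic : zp_min \is monic;
  zp_min_size : size zp_min = zp_deg.+1;
  zp_min_coef : forall i, (0 <= zp_min`_i) && (zp_min`_i < zp_char%:Z);
  zp_min_root : zeval zp_gen zp_min = 0;
  zp_min_dvdz : forall Q : {poly int}, (size Q <= zp_deg)%N -> zeval zp_gen Q = 0 ->
    forall i, (zp_char%:Z %| Q`_i)%Z;
  zp_gen_surj : forall x : F, exists Q, zeval zp_gen Q = x }.

Lemma finField_vanishing_monic (F : finFieldType) :
  exists2 Q : {poly int}, Q \is monic & forall x : F, zeval x Q = 0.
Proof.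
have q_gt1 := card_finNzRing_gt1 F; have q_gt0 := ltnW q_gt1.
exists ('X * ('X^(#|F|.-1) - 1)) => [|x].
  by rewrite monicMl ?monicX // monic_Xn_sub_1 // -ltnS prednK.
rewrite zevalM zevalB zevalX zevalXn zeval1 mulrBr mulr1 -exprS prednK //.
by rewrite expf_card subrr.
Qed.

(* With g a generator of the unit group, take for m a monic polynomial of least
   degree vanishing at g, reduced mod p. *)
Lemma zpres_inhabited (F : finFieldType) : inhabited (zpres F).
Proof.
have [p p_prime pcharF] := finPcharP F; have p0 : p%:R = 0 :> F := pcharf0 pcharF.
have p_gt1 := prime_gt1 p_prime; have [g g_surj] := finField_zeval_generator F.
pose vanishing n := `[< exists Q : {poly int}, [/\ Q \is monic, size Q = n & zeval g Q = 0] >].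
have [V monV V0] := finField_vanishing_monic F.
have vanishing_V : vanishing (size V) by apply/asboolP; exists V.
case: (@ex_minnP vanishing (ex_intro _ (size V) vanishing_V)) => n /asboolP [Q [monQ szQ Q0]] n_min.
have n_gt0 : (0 < n)%N by rewrite -szQ size_poly_gt0 monic_neq0.
have min_monic S : S \is monic -> zeval g S = 0 -> (n.-1 < size S)%N.
  move=> monS S0; rewrite prednK // n_min //.
  by apply/asboolP; exists S.
have [monm szm] := poly_modz_monic p_gt1 monQ.
constructor; apply: (@ZPres F p n.-1 g (poly_modz p Q)) => //.
- by rewrite szm szQ prednK.
- by move=> i; rewrite poly_modz_coef_range ?prime_gt0.
- by rewrite zeval_poly_modz.
- exact: zeval_eq0_dvdz.
Qed.

Section Presentation.
Variables (F : finFieldType) (P : zpres F).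
Local Notation p := (zp_char P).
Local Notation d := (zp_deg P).
Local Notation g := (zp_gen P).
Local Notation m := (zp_min P).

Lemma zp_char_gt1 : (1 < p)%N.
Proof. exact: prime_gt1 (zp_char_prime P). Qed.

Lemma zp_deg_gt0 : (0 < d)%N.
Proof.
case d0: d (zp_min_size P) => [|//] szm.
have := zp_min_root P; rewrite (zeval_sum _ (eq_leq szm)) big_ord1 expr0 mulr1.
have := zp_min_monic P; rewrite monicE lead_coefE szm => /eqP ->.
by move/eqP; rewrite oner_eq0.
Qed.

Definition zp_min_digits : seq nat := mkseq (fun i => absz m`_i) d.+1.

Lemma size_zp_min_digits : size zp_min_digits = d.+1.
Proof. exact: size_mkseq. Qed.

Lemma nat_poly_zp_min_digits : nat_poly zp_min_digits = m.
Proof.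
apply: nat_poly_absz; first by rewrite zp_min_size.
by move=> i; have /andP [] := zp_min_coef P i.
Qed.

Lemma zp_min_digits_lt : all (fun c => c < p)%N zp_min_digits.
Proof.
apply/allP => c /mapP [i _ ->]; have /andP [m_ge0 m_lt] := zp_min_coef P i.
by rewrite -ltz_nat gez0_abs.
Qed.

Lemma rmodp_zp_min_size (Q : {poly int}) : (size (Pdiv.Ring.rmodp Q m) <= d)%N.
Proof.
by rewrite -ltnS -(zp_min_size P) Pdiv.Ring.ltn_rmodp monic_neq0 ?zp_min_monic.
Qed.

Lemma zeval_rmodp_zp_min (S : comNzRingType) (y : S) (Q : {poly int}) :
  zeval y m = 0 -> zeval y (Pdiv.Ring.rmodp Q m) = zeval y Q.
Proof.
move=> m0; rewrite [in RHS](Pdiv.RingMonic.rdivp_eq (zp_min_monic P) Q).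
by rewrite zevalD zevalM m0 mulr0 add0r.
Qed.

Lemma zp_digits_exist (x : F) : exists cs : seq nat,
  [/\ size cs = d, all (fun c => c < p)%N cs & x = zeval g (nat_poly cs)].
Proof.
have [Q <-] := zp_gen_surj P x; set R := poly_modz p (Pdiv.Ring.rmodp Q m).
have R_range i := poly_modz_coef_range (Pdiv.Ring.rmodp Q m) i (ltnW zp_char_gt1).
have szR : (size R <= d)%N := leq_trans (size_poly_modz _ _) (rmodp_zp_min_size Q).
exists (mkseq (fun i => absz R`_i) d); split; first exact: size_mkseq.
  apply/allP => c /mapP [i _ ->]; have /andP [R_ge0 R_lt] := R_range i.
  by rewrite -ltz_nat gez0_abs.
rewrite nat_poly_absz // => [|i]; last by have /andP [] := R_range i.
by rewrite zeval_poly_modz ?zp_charE // zeval_rmodp_zp_min ?zp_min_root.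
Qed.

Lemma zp_card : (p ^ d <= #|F|)%N.
Proof.
pose Pof (phi : {ffun 'I_d -> 'I_p}) : {poly int} :=
  \poly_(i < d) (if insub i is Some j then (phi j : nat)%:Z else 0).
suff /leq_card : injective (fun phi => zeval g (Pof phi)) by rewrite card_ffun !card_ord.
move=> phi psi /eqP; rewrite -subr_eq0 -zevalB => /eqP fphi_psi.
apply/ffunP => i; apply/val_inj.
have szD : (size (Pof phi - Pof psi)%R <= d)%N.
  by rewrite (leq_trans (size_polyD _ _)) // size_polyN geq_max !size_poly.
have := zp_min_dvdz szD fphi_psi i; rewrite coefB !coef_poly ltn_ord valK.
exact: dvdz_small_eq.
Qed.

Lemma zeval_transfer (S : comNzRingType) (y : S) :
  p%:R = 0 :> S -> zeval y m = 0 -> forall Q, zeval g Q = 0 -> zeval y Q = 0.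
Proof.
move=> pS my0 Q Q0; rewrite -zeval_rmodp_zp_min //.
apply: (zeval_dvdz_eq0 _ pS); apply: zp_min_dvdz; first exact: rmodp_zp_min_size.
by rewrite zeval_rmodp_zp_min ?zp_min_root.
Qed.

Lemma zp_hom (S : comNzRingType) (y : S) : p%:R = 0 :> S -> zeval y m = 0 ->
  exists h : F -> S, [/\ injective h, {morph h : a b / a + b}, {morph h : a b / a * b}
    & forall Q, h (zeval g Q) = zeval y Q].
Proof.
move=> pS my0; have [Q_of Q_ofK] := fin_all_exists (zp_gen_surj P).
pose h x := zeval y (Q_of x).
have hE Q : h (zeval g Q) = zeval y Q.
  apply/eqP; rewrite -subr_eq0 -zevalB; apply/eqP; apply: zeval_transfer => //.
  by rewrite zevalB Q_ofK subrr.
have hD : {morph h : a b / a + b}.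
  by move=> a b; rewrite -[a]Q_ofK -[b]Q_ofK -zevalD !hE zevalD.
have hM : {morph h : a b / a * b}.
  by move=> a b; rewrite -[a]Q_ofK -[b]Q_ofK -zevalM !hE zevalM.
have h1 : h 1 = 1 by rewrite -(zeval1 g) hE zeval1.
exists h; split=> // a b hab; apply/eqP; rewrite -subr_eq0; apply/negPn/negP => ab_neq0.
have hab0 : h (a - b) = 0 by apply: (addIr (h b)); rewrite -hD subrK hab add0r.
by have := hM (a - b) (a - b)^-1; rewrite mulfV // hab0 mul0r h1 => /eqP; rewrite oner_eq0.
Qed.

Definition zp_width : nat := (up_log 2 p).+1.
Local Notation W := zp_width.

Lemma ltn_zp_width c : (c <= p)%N -> (c < 2 ^ W)%N.
Proof.
move=> le_c; rewrite /zp_width expnS; have := @up_logP 2 p isT.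
by have := expn_gt0 2 (up_log 2 p); lia.
Qed.

Lemma all_ltn_zp_width cs : all (fun c => c < p)%N cs -> all (fun c => c < 2 ^ W)%N cs.
Proof. by move=> /allP cs_lt; apply/allP => c /cs_lt /ltnW /ltn_zp_width. Qed.

Lemma zp_size_bound : ((d + 1) * (W + 1) <= 12 * log2up #|F|)%N.
Proof.
have p_gt1 := zp_char_gt1; have d_gt0 := zp_deg_gt0; have card := zp_card.
rewrite /zp_width /log2up; set B := up_log 2 p; set L := up_log 2 #|F|.
have B_gt0 : (0 < B)%N by rewrite up_log_gt0 p_gt1.
have p_gt : (2 ^ B.-1 < p)%N by apply: up_log_gtn.
have q_le : (#|F| <= 2 ^ L)%N by apply: up_logP.
have BdL : (B.-1 * d <= L)%N.
  rewrite -(leq_exp2l _ _ (isT : (1 < 2)%N)) expnM (leq_trans _ q_le) //.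
  by rewrite (leq_trans _ card) // leq_exp2r // ltnW.
have dL : (d <= L)%N.
  rewrite -(leq_exp2l _ _ (isT : (1 < 2)%N)) (leq_trans _ q_le) //.
  by rewrite (leq_trans _ card) // leq_exp2r.
by move: BdL; rewrite -(prednK B_gt0) /=; move: B.-1 => B' BdL; nia.
Qed.

End Presentation.

(** * Terms and formulas *)

Definition ring_str (R : comNzRingType) : Lstr := @LStr R 0 1 +%R *%R.

Definition horner_term (b : lterm) (ts : seq lterm) : lterm :=
  foldr (fun t acc => TAdd t (TMul b acc)) TZero ts.

Definition two_term : lterm := TAdd TOne TOne.

Definition bit_term (b : bool) : lterm := if b then TOne else TZero.

Definition binary_term (W c : nat) : lterm :=
  horner_term two_term [seq bit_term (odd (c %/ 2 ^ t)) | t <- iota 0 W].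

Definition poly_term (x : lterm) (W : nat) (cs : seq nat) : lterm :=
  horner_term x [seq binary_term W c | c <- cs].

Definition bits_term (v0 W : nat) : lterm :=
  horner_term two_term [seq TVar (v0 + t) | t <- iota 0 W].

Definition digits_term (x : lterm) (v0 W d : nat) : lterm :=
  horner_term x [seq bits_term (v0 + i * W) W | i <- iota 0 d].

Lemma ltn_block_index i t d W : (i < d)%N -> (t < W)%N -> (i * W + t < d * W)%N.
Proof. by move=> lt_i lt_t; nia. Qed.

Lemma binary_expansion (W c : nat) : (c < 2 ^ W)%N ->
  c = (\sum_(t < W) odd (c %/ 2 ^ t) * 2 ^ t)%N.
Proof.
elim: W c => [|W IH] c c_lt; first by move: c_lt; rewrite expn0 ltnS leqn0 big_ord0 => /eqP.
rewrite big_ord_recl /= expn0 divn1 muln1.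
have half_lt : (c./2 < 2 ^ W)%N by rewrite -divn2 ltn_divLR // -expnSr.
rewrite {1}[c](esym (odd_double_half c)) (IH _ half_lt) -muln2 big_distrl /=; congr (_ + _)%N.
by apply: eq_bigr => i _; rewrite -divn2 -divnMA /bump /= add1n expnS; lia.
Qed.

Lemma sum_binary_digits (R : comNzRingType) (W c : nat) : (c < 2 ^ W)%N ->
  \sum_(t < W) (odd (c %/ 2 ^ t))%:R * 2 ^+ t = c%:R :> R.
Proof.
move=> c_lt; rewrite [in RHS](binary_expansion c_lt) natr_sum.
by apply: eq_bigr => t _; rewrite natrM natrX.
Qed.

Lemma sum_bits_natr (R : comNzRingType) (W : nat) (f : nat -> R) :
  (forall t, (t < W)%N -> f t = 0 \/ f t = 1) ->
  \sum_(t < W) f t * 2 ^+ t = (\sum_(t < W) (f t == 1%R) * 2 ^ t)%N%:R.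
Proof.
move=> f01; rewrite natr_sum; apply: eq_bigr => t _; rewrite natrM natrX.
by case: (f01 t (ltn_ord t)) => ->; rewrite ?eqxx // eq_sym oner_eq0.
Qed.

Section TermEval.
Variables (R : comNzRingType) (e : nat -> ring_str R).

Lemma teval_horner_term b ts :
  teval e (horner_term b ts) = \sum_(i < size ts) teval e (nth TZero ts i) * teval e b ^+ i.
Proof.
elim: ts => [|t ts IH] /=; first by rewrite big_ord0.
rewrite big_ord_recl /= expr0 mulr1 IH mulr_sumr; congr (_ + _).
by apply: eq_bigr => i _; rewrite exprS mulrCA.
Qed.

Lemma teval_horner_term_map (T : Type) (x0 : T) b (f : T -> lterm) (s : seq T) :
  teval e (horner_term b [seq f i | i <- s]) =
  \sum_(i < size s) teval e (f (nth x0 s i)) * teval e b ^+ i.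
Proof.
rewrite teval_horner_term size_map; apply: eq_bigr => i _.
by rewrite (nth_map x0).
Qed.

Lemma teval_binary_term W c : (c < 2 ^ W)%N -> teval e (binary_term W c) = c%:R.
Proof.
move=> c_lt; rewrite (teval_horner_term_map 0%N) size_iota -(sum_binary_digits R c_lt).
by apply: eq_bigr => t _; rewrite nth_iota // /bit_term; case: odd.
Qed.

Lemma teval_poly_term x W cs : all (fun c => c < 2 ^ W)%N cs ->
  teval e (poly_term x W cs) = zeval (teval e x) (nat_poly cs).
Proof.
move=> /allP cs_lt; rewrite (teval_horner_term_map 0%N) zeval_nat_poly.
by apply: eq_bigr => i _; rewrite teval_binary_term ?cs_lt ?mem_nth.
Qed.

Lemma teval_digits_term x v0 W d : teval e (digits_term x v0 W d) =
  \sum_(i < d) (\sum_(t < W) e (v0 + i * W + t)%N * 2 ^+ t) * teval e x ^+ i.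
Proof.
rewrite (teval_horner_term_map 0%N) size_iota; apply: eq_bigr => i _.
rewrite nth_iota // (teval_horner_term_map 0%N) size_iota; congr (_ * _).
by apply: eq_bigr => t _; rewrite nth_iota.
Qed.

End TermEval.

Lemma tlen_horner_term_map (T : eqType) b (f : T -> lterm) (s : seq T) L :
  (forall i, i \in s -> tlen (f i) = L) ->
  tlen (horner_term b [seq f i | i <- s]) = (1 + size s * (L + tlen b + 2))%N.
Proof.
elim: s => //= i s IH fL; rewrite fL ?mem_head // IH => [|j js]; first lia.
by apply: fL; rewrite inE js orbT.
Qed.

Lemma tlen_binary_term W c : tlen (binary_term W c) = (1 + W * 6)%N.
Proof.
by rewrite (@tlen_horner_term_map _ _ _ _ 1) ?size_iota // => t _; rewrite /bit_term; case: odd.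
Qed.

Lemma tlen_poly_term v W cs : tlen (poly_term (TVar v) W cs) = (1 + size cs * (W * 6 + 4))%N.
Proof.
rewrite (@tlen_horner_term_map _ _ _ _ (1 + W * 6)) => [/=|c _]; first lia.
exact: tlen_binary_term.
Qed.

Lemma tlen_digits_term v v0 W d : tlen (digits_term (TVar v) v0 W d) = (1 + d * (W * 6 + 4))%N.
Proof.
rewrite (@tlen_horner_term_map _ _ _ _ (1 + W * 6)) => [/=|i _]; first by rewrite size_iota; lia.
by rewrite (@tlen_horner_term_map _ _ _ _ 1) ?size_iota.
Qed.

Lemma tvars_horner_term (P : pred nat) b ts : all P (tvars b) ->
  all (fun t => all P (tvars t)) ts -> all P (tvars (horner_term b ts)).
Proof.
by move=> Pb; elim: ts => //= t ts IH /andP [Pt /IH Pts]; rewrite !all_cat Pt Pb.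
Qed.

Lemma tvars_binary_term W c : tvars (binary_term W c) = [::].
Proof. by rewrite /binary_term; elim: (iota 0 W) => //= t ts ->; case: odd. Qed.

Definition conj_all (fs : seq lform) : lform := foldr FAnd (FEq TZero TZero) fs.

Definition exists_vars (vs : seq nat) (f : lform) : lform := foldr FEx f vs.

Section Satisfaction.
Variables (M : Lstr) (e : nat -> M).

Lemma holds_conj_all_cat fs gs :
  holds e (conj_all (fs ++ gs)) <-> holds e (conj_all fs) /\ holds e (conj_all gs).
Proof. by elim: fs => [|f fs IH] /=; [tauto | rewrite IH; tauto]. Qed.

Lemma holds_conj_all_map (T : eqType) (f : T -> lform) s :
  holds e (conj_all [seq f i | i <- s]) <-> forall i, i \in s -> holds e (f i).
Proof.
elim: s => [|i s IH] /=; first by [].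
rewrite IH; split=> [[fi fs] j|fs]; first by rewrite inE => /predU1P [->|/fs].
by split=> [|j js]; apply: fs; rewrite ?mem_head ?inE ?js ?orbT.
Qed.

End Satisfaction.

Lemma holds_exists_vars (M : Lstr) (e : nat -> M) vs f :
  holds e (exists_vars vs f) <->
  exists ws : nat -> M, holds (fun v => if v \in vs then ws v else e v) f.
Proof.
have holds_eq E1 E2 : E1 = E2 -> holds E1 f -> holds E2 f by move->.
elim: vs e => [|v vs IH] e /=; first by split=> [fe|[ws fe]]; [exists e|].
split=> [[m /IH [ws fe]]|[ws fe]].
  exists (fun u => if u \in vs then ws u else m); apply: holds_eq fe.
  apply: funext => u; rewrite inE /upd.
  by case: (u \in vs); rewrite ?orbT ?orbF //; case: eqP.
exists (ws v); apply/(IH (upd e v (ws v))); exists ws; apply: holds_eq fe.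
apply: funext => u; rewrite inE /upd.
by case: (u \in vs); rewrite ?orbT ?orbF //; case: eqP => [->|].
Qed.

Lemma qfree_conj_all fs : all qfree fs -> qfree (conj_all fs).
Proof. by elim: fs => //= f fs IH /andP [-> /IH]. Qed.

Lemma qmatrix_conj_all fs : qmatrix (conj_all fs) = conj_all fs.
Proof. by case: fs. Qed.

Lemma qprefix_exists_vars vs f : qprefix (exists_vars vs f) = nseq (size vs) true ++ qprefix f.
Proof. by elim: vs => //= v vs ->. Qed.

Lemma qmatrix_exists_vars vs f : qmatrix (exists_vars vs f) = qmatrix f.
Proof. by elim: vs. Qed.

Lemma alternations_cons2 b c s :
  alternations [:: b, c & s] = ((b != c) + alternations (c :: s))%N.
Proof. by []. Qed.

Lemma alternations_cons_nseq b n : alternations (b :: nseq n b) = 0%N.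
Proof. by elim: n => //= n ->; rewrite eqxx. Qed.

Lemma fvars_exists_vars vs f u :
  u \in fvars (exists_vars vs f) -> (u \in fvars f) && (u \notin vs).
Proof.
elim: vs => [|v vs IH] /=; first by move=> ->.
by rewrite mem_filter => /andP [uv /IH /andP [-> uvs]]; rewrite inE negb_or uv.
Qed.

Lemma fvars_conj_all (P : pred nat) fs :
  all (fun f => all P (fvars f)) fs -> all P (fvars (conj_all fs)).
Proof. by elim: fs => //= f fs IH /andP [Pf /IH Pfs]; rewrite all_cat Pf. Qed.

Lemma flen_conj_all fs : flen (conj_all fs) = (3 + sumn [seq (flen f).+1 | f <- fs])%N.
Proof. by elim: fs => //= f fs ->; lia. Qed.

Lemma flen_exists_vars vs f : flen (exists_vars vs f) = (2 * size vs + flen f)%N.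
Proof. by elim: vs => //= v vs ->; lia. Qed.

Lemma sumn_map_const (T : eqType) (f : T -> nat) (s : seq T) c :
  (forall x, x \in s -> f x = c) -> sumn [seq f x | x <- s] = (size s * c)%N.
Proof.
elim: s => //= x s IH fc; rewrite fc ?mem_head // IH // => y ys.
by apply: fc; rewrite inE ys orbT.
Qed.

(** * Models of the ring axioms *)

Definition ring_law_forms (x y z w : lterm) : seq lform :=
  [:: FEq (TAdd x (TAdd y z)) (TAdd (TAdd x y) z);
      FEq (TAdd x y) (TAdd y x);
      FEq (TAdd TZero x) x;
      FEq (TAdd w x) TZero;
      FEq (TMul x (TMul y z)) (TMul (TMul x y) z);
      FEq (TMul x y) (TMul y x);
      FEq (TMul TOne x) x;
      FEq (TMul (TAdd x y) z) (TAdd (TMul x z) (TMul y z));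
      FNot (FEq TOne TZero)].

Record comring_axioms (N : Lstr) : Prop := ComringAxioms {
  sadd_assoc : forall x y z : N, sadd x (sadd y z) = sadd (sadd x y) z;
  sadd_comm : forall x y : N, sadd x y = sadd y x;
  sadd_zero : forall x : N, sadd (szero N) x = x;
  sadd_opp : forall x : N, exists w, sadd w x = szero N;
  smul_assoc : forall x y z : N, smul x (smul y z) = smul (smul x y) z;
  smul_comm : forall x y : N, smul x y = smul y x;
  smul_one : forall x : N, smul (sone N) x = x;
  smul_addl : forall x y z : N, smul (sadd x y) z = sadd (smul x z) (smul y z);
  sone_neq0 : sone N <> szero N }.

Lemma comring_axioms_of_laws (N : Lstr) (a b c d : nat) :
  (forall x y z : N, exists2 E : nat -> N, [/\ E a = x, E b = y & E c = z] &
     holds E (conj_all (ring_law_forms (TVar a) (TVar b) (TVar c) (TVar d)))) ->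
  comring_axioms N.
Proof.
move=> laws; split=> [x y z|x y|x|x|x y z|x y|x|x y z|].
- by have [E [<- <- <-] /=] := laws x y z; tauto.
- by have [E [<- <- _] /=] := laws x y x; tauto.
- by have [E [<- _ _] /=] := laws x x x; tauto.
- by have [E [<- _ _] /=] := laws x x x; exists (E d); tauto.
- by have [E [<- <- <-] /=] := laws x y z; tauto.
- by have [E [<- <- _] /=] := laws x y x; tauto.
- by have [E [<- _ _] /=] := laws x x x; tauto.
- by have [E [<- <- <-] /=] := laws x y z; tauto.
- by have [E _ /=] := laws (szero N) (szero N) (szero N); tauto.
Qed.

Lemma ring_laws_hold (R : comNzRingType) (E : nat -> ring_str R) (a b c d : nat) :
  E d = - E a -> holds E (conj_all (ring_law_forms (TVar a) (TVar b) (TVar c) (TVar d))).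
Proof.
move=> Ed /=; rewrite Ed; do !split; rewrite ?addrA ?mulrA ?mulrDl ?mul1r ?add0r ?addNr //.
- exact: addrC.
- exact: mulrC.
- exact/eqP/oner_neq0.
Qed.

Definition comring_of (N : Lstr) (HN : comring_axioms N) : Type := carrier N.

HB.instance Definition _ N HN := gen_eqMixin (@comring_of N HN).
HB.instance Definition _ N HN := gen_choiceMixin (@comring_of N HN).

Section ComringOfAxioms.
Variables (N : Lstr) (HN : comring_axioms N).
Local Notation S := (comring_of HN).

Definition comring_opp (x : S) : S := sval (cid (sadd_opp HN x)).

Lemma comring_addNr (x : S) : sadd (comring_opp x) x = szero N.
Proof. exact: svalP (cid (sadd_opp HN x)). Qed.

Lemma comring_one_neq0 : (sone N : S) != szero N.
Proof. exact/eqP/(sone_neq0 HN). Qed.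

End ComringOfAxioms.

HB.instance Definition _ N HN := GRing.isZmodule.Build (@comring_of N HN)
  (sadd_assoc HN : @associative (comring_of HN) (@sadd N))
  (sadd_comm HN : @commutative (comring_of HN) _ (@sadd N))
  (sadd_zero HN : @left_id (comring_of HN) _ (szero N) (@sadd N))
  (@comring_addNr N HN : @left_inverse (comring_of HN) _ _ (szero N) (@comring_opp N HN) (@sadd N)).

HB.instance Definition _ N HN := GRing.Zmodule_isComNzRing.Build (@comring_of N HN)
  (smul_assoc HN : @associative (comring_of HN) (@smul N))
  (smul_comm HN : @commutative (comring_of HN) _ (@smul N))
  (smul_one HN : @left_id (comring_of HN) _ (sone N) (@smul N))
  (smul_addl HN : @left_distributive (comring_of HN) _ (@smul N) (@sadd N))
  (@comring_one_neq0 N HN).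

Section ComringOfHolds.
Variables (N : Lstr) (HN : comring_axioms N).

Lemma teval_comring_of (e : nat -> N) t :
  teval e t = teval (e : nat -> ring_str (comring_of HN)) t.
Proof. by elim: t => //= [t1 -> t2 ->|t1 -> t2 ->]. Qed.

Lemma holds_comring_of (e : nat -> N) f :
  holds e f <-> holds (e : nat -> ring_str (comring_of HN)) f.
Proof.
elim: f e => /= [t1 t2|f IH|f IHf g IHg|f IHf g IHg|x f IH|x f IH] e.
- by rewrite !teval_comring_of.
- by rewrite IH.
- by rewrite IHf IHg.
- by rewrite IHf IHg.
- by split=> [[m /IH]|[m /IH]]; exists m.
- by split=> fm m; apply/IH.
Qed.

End ComringOfHolds.

(** * The describing formula *)

Section FieldFormula.
Variables (k W d p : nat) (mcs : seq nat) (acs : 'I_k -> seq nat).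

(* Variables 0, ..., k - 1 hold the tuple, k the generator, k + 1, k + 2, k + 3
   the universally quantified x, y, z; the block k + 4, ..., k + 3 + d * W
   holds the binary digits of the coefficients of x, and k + 4 + d * W the
   additive inverse of x. *)

Definition field_matrix : lform := conj_all (
  ring_law_forms (TVar k.+1) (TVar k.+2) (TVar k.+3) (TVar (k.+4 + d * W)) ++
  [:: FEq (binary_term W p) TZero;
      FEq (poly_term (TVar k) W mcs) TZero;
      FEq (TVar k.+1) (digits_term (TVar k) k.+4 W d)] ++
  [seq FEq (TVar j) (poly_term (TVar k) W (acs j)) | j : 'I_k <- enum 'I_k] ++
  [seq FOr (FEq (TVar v) TZero) (FEq (TVar v) TOne) | v <- iota k.+4 (d * W)]).

Definition field_formula : lform :=
  FEx k (FAll k.+1 (FAll k.+2 (FAll k.+3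
    (exists_vars (iota k.+4 (d * W).+1) field_matrix)))).

Lemma field_formula_sigma3 : is_sigma 3 field_formula.
Proof.
rewrite /is_sigma.
have -> : qprefix field_formula = [:: true, false, false, false, true & nseq (d * W) true].
  by rewrite /= qprefix_exists_vars size_iota cats0.
rewrite !alternations_cons2 alternations_cons_nseq /= qmatrix_exists_vars andbT.
rewrite qmatrix_conj_all qfree_conj_all // !all_cat !all_map.
by apply/and4P; split=> //; apply/allP.
Qed.

Lemma fvars_field_formula : all (fun v => v < k)%N (fvars field_formula).
Proof.
set B := (k.+4 + d * W).+1.
have tvars_var v : (v < B)%N -> all (fun u => u < B)%N (tvars (TVar v)) by rewrite /= andbT.
have tvars_poly cs : all (fun u => u < B)%N (tvars (poly_term (TVar k) W cs)).
  apply: tvars_horner_term; first by apply: tvars_var; lia.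
  by rewrite all_map; apply/allP => c _ /=; rewrite tvars_binary_term.
have matrix_lt : all (fun u => u < B)%N (fvars field_matrix).
  apply: fvars_conj_all; rewrite !all_cat !all_map /=.
  rewrite !cats0 !andbT tvars_binary_term !tvars_poly /=.
  apply/and4P; split; first by rewrite /B; lia.
  - apply/andP; split; first by rewrite /B; lia.
    apply: tvars_horner_term; first by apply: tvars_var; lia.
    rewrite all_map; apply/allP => i; rewrite mem_iota => /andP [_ i_lt] /=.
    apply: tvars_horner_term => //; rewrite all_map; apply/allP => t.
    rewrite mem_iota => /andP [_ t_lt] /=; rewrite andbT /B.
    by have := ltn_block_index i_lt t_lt; lia.
  - by apply/allP => j _ /=; rewrite tvars_poly andbT /B; have := ltn_ord j; lia.
  - by apply/allP => v; rewrite mem_iota /B => /andP [? ?] /=; lia.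
apply/allP => u; rewrite /= !mem_filter => /and4P [/eqP u_k /eqP u_k1 /eqP u_k2].
case/and3P => /eqP u_k3 /eqP u_k4 /fvars_exists_vars /andP [/(allP matrix_lt) u_lt].
by rewrite mem_iota /B in u_lt *; lia.
Qed.

Lemma flen_field_formula : size mcs = d.+1 -> (forall j, size (acs j) = d) ->
  (flen field_formula <= 200 * ((k + 1) * ((d + 1) * (W + 1))))%N.
Proof.
move=> sz_mcs sz_acs.
rewrite /= flen_exists_vars size_iota flen_conj_all !map_cat !sumn_cat -!map_comp.
rewrite (@sumn_map_const _ _ _ (4 + d * (W * 6 + 4))); last first.
  by move=> j _ /=; rewrite tlen_poly_term sz_acs; lia.
rewrite (@sumn_map_const _ _ _ 8) // -enumT size_enum_ord size_iota /=.
rewrite tlen_binary_term tlen_poly_term tlen_digits_term sz_mcs.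
nia.
Qed.

Definition field_env (M : Type) (e : nat -> M) (G x y z : M) (ws : nat -> M) : nat -> M :=
  fun v => if v \in iota k.+4 (d * W).+1 then ws v
           else upd (upd (upd (upd e k G) k.+1 x) k.+2 y) k.+3 z v.

Lemma holds_field_formula (M : Lstr) (e : nat -> M) :
  holds e field_formula <->
  exists G, forall x y z, exists ws, holds (field_env e G x y z ws) field_matrix.
Proof.
rewrite /field_formula; cbn [holds]; split=> [[G fG]|[G fG]]; exists G => x y z.
  by have /holds_exists_vars [ws fws] := fG x y z; exists ws.
by have [ws fws] := fG x y z; apply/holds_exists_vars; exists ws.
Qed.

Section FieldEnv.
Variables (M : Type) (e : nat -> M) (G x y z : M) (ws : nat -> M).
Local Notation E := (field_env e G x y z ws).

Lemma field_env_vars : [/\ E k = G, E k.+1 = x, E k.+2 = y & E k.+3 = z].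
Proof.
rewrite /field_env /upd !mem_iota.
by split; repeat case: ifP => /=; try (move/eqP; lia); try lia.
Qed.

Lemma field_env_lt j : (j < k)%N -> E j = e j.
Proof.
move=> lt_j; rewrite /field_env /upd mem_iota.
by repeat case: ifP => /=; try (move/eqP; lia); try lia.
Qed.

Lemma field_env_ws v : (k.+4 <= v <= k.+4 + d * W)%N -> E v = ws v.
Proof. by move=> v_in; rewrite /field_env mem_iota ifT //; lia. Qed.

End FieldEnv.

Lemma comring_axioms_of_field_formula (N : Lstr) (e : nat -> N) :
  holds e field_formula -> comring_axioms N.
Proof.
move=> /holds_field_formula [G fG].
apply: (@comring_axioms_of_laws _ k.+1 k.+2 k.+3 (k.+4 + d * W)) => x y z.
have [ws /holds_conj_all_cat [laws _]] := fG x y z.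
by exists (field_env e G x y z ws); first by have [] := field_env_vars e G x y z ws.
Qed.

Section RingSemantics.
Hypotheses (p_lt : (p < 2 ^ W)%N) (mcs_lt : all (fun c => c < 2 ^ W)%N mcs).
Hypothesis acs_lt : forall j, all (fun c => c < 2 ^ W)%N (acs j).
Variables (R : comNzRingType) (E : nat -> R).

Lemma holds_field_matrix : holds (E : nat -> ring_str R) field_matrix <->
  holds (E : nat -> ring_str R)
    (conj_all (ring_law_forms (TVar k.+1) (TVar k.+2) (TVar k.+3) (TVar (k.+4 + d * W)))) /\
  [/\ p%:R = 0 :> R, zeval (E k) (nat_poly mcs) = 0,
      E k.+1 = \sum_(i < d) (\sum_(t < W) E (k.+4 + i * W + t)%N * 2 ^+ t) * E k ^+ i,
      forall j : 'I_k, E j = zeval (E k) (nat_poly (acs j)) &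
      forall n, (n < d * W)%N -> E (k.+4 + n)%N = 0 \/ E (k.+4 + n)%N = 1].
Proof.
rewrite /field_matrix !holds_conj_all_cat !holds_conj_all_map.
rewrite [holds _ (conj_all [:: _; _; _])]/= teval_binary_term // teval_poly_term //.
rewrite teval_digits_term.
split=> [[laws [[p0 [m0 [xE _]]] [acsE bitE]]]|[laws [p0 m0 xE acsE bitE]]].
  split=> //; split=> // [j|n n_lt].
    by have /= -> := acsE j (mem_enum _ j); rewrite teval_poly_term.
  by apply: bitE; rewrite mem_iota; lia.
do !split=> //.
  by move=> j _ /=; rewrite acsE teval_poly_term.
move=> v; rewrite mem_iota => /andP [le_v lt_v] /=.
by rewrite -(subnKC le_v); apply: bitE; lia.
Qed.

Lemma field_matrix_elem : holds (E : nat -> ring_str R) field_matrix ->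
  exists cs : seq nat, E k.+1 = zeval (E k) (nat_poly cs).
Proof.
move=> /holds_field_matrix [_ [_ _ xE _ bits]].
pose c i := (\sum_(t < W) (E (k.+4 + i * W + t) == 1%R) * 2 ^ t)%N.
exists (mkseq c d); rewrite zeval_nat_poly size_mkseq xE; apply: eq_bigr => i _.
rewrite nth_mkseq // (@sum_bits_natr _ _ (fun t => E (k.+4 + i * W + t)%N)) // => t t_lt.
by rewrite -addnA; apply: bits; apply: ltn_block_index.
Qed.

End RingSemantics.

End FieldFormula.

Arguments field_matrix : clear implicits.
Arguments field_formula : clear implicits.

Section ZpFormula.
Variables (F : finFieldType) (P : zpres F) (k : nat) (acs : 'I_k -> seq nat).
Local Notation p := (zp_char P).
Local Notation d := (zp_deg P).
Local Notation g := (zp_gen P).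
Local Notation W := (zp_width P).

Hypothesis acs_lt : forall j, all (fun c => c < p)%N (acs j).

Definition zp_formula : lform := field_formula k W d p (zp_min_digits P) acs.

Let p_lt : (p < 2 ^ W)%N := ltn_zp_width (leqnn p).
Let min_lt := all_ltn_zp_width (zp_min_digits_lt P).
Let acs_lt' j := all_ltn_zp_width (acs_lt j).

Lemma zp_formula_sat (a : 'I_k -> field_str F) :
  (forall j, a j = zeval g (nat_poly (acs j))) -> sat a zp_formula.
Proof.
move=> aE e eE; apply/holds_field_formula; exists g => x y z.
have [cs [sz_cs cs_lt xE]] := zp_digits_exist P x.
pose bit n : F := (odd (nth 0%N cs (n %/ W) %/ 2 ^ (n %% W)))%:R.
pose ws v := if v == (k.+4 + d * W)%N then - x else bit (v - k.+4)%N.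
exists ws.
have [EG Ex _ _] := field_env_vars k W d e g x y z ws.
have Ebit n : (n < d * W)%N -> field_env k W d e g x y z ws (k.+4 + n)%N = bit n.
  move=> n_lt; rewrite field_env_ws /ws; last lia.
  by rewrite ifN ?addKn // neq_ltn ltn_add2l n_lt.
apply/(holds_field_matrix d p_lt min_lt acs_lt'); split.
  apply: ring_laws_hold; rewrite Ex field_env_ws; first by rewrite /ws eqxx.
  by rewrite leqnn andbT; lia.
split=> [||||n /Ebit ->].
- exact: zp_charE.
- by rewrite EG nat_poly_zp_min_digits zp_min_root.
- rewrite Ex EG {1}xE zeval_nat_poly sz_cs; apply: eq_bigr => i _; congr (_ * _).
  rewrite -(sum_binary_digits F (_ : nth 0%N cs i < 2 ^ W)%N); last first.
    by apply: ltn_zp_width; apply: ltnW; apply: (allP cs_lt); rewrite mem_nth ?sz_cs.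
  apply: eq_bigr => t _; rewrite -addnA Ebit ?ltn_block_index // /bit.
  have -> : ((i * W + t) %/ W = i)%N by rewrite divnMDl // divn_small ?addn0.
  by rewrite modnMDl modn_small.
- by move=> j; rewrite field_env_lt // eE aE EG.
- by rewrite /bit; case: odd; [right | left].
Qed.

Lemma zp_formula_unique (a : 'I_k -> field_str F) (N : Lstr) (b : 'I_k -> N) :
  (forall j, a j = zeval g (nat_poly (acs j))) -> sat b zp_formula -> iso_tuple a b.
Proof.
move=> aE sat_b; pose e v : N := if insub v is Some j then b j else szero N.
have eE (j : 'I_k) : e j = b j by rewrite /e valK.
have HN := comring_axioms_of_field_formula (sat_b e eE).
have /holds_field_formula [G fG] := sat_b e eE.
have matrix (x : comring_of HN) : exists2 ws : nat -> comring_of HN,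
    @field_env k W d (comring_of HN) e G x x x ws k.+1 = x &
    holds (@field_env k W d (comring_of HN) e G x x x ws : nat -> ring_str _)
      (field_matrix k W d p (zp_min_digits P) acs).
  have [ws /(holds_comring_of HN) fws] := fG x x x; exists ws => //.
  by have [] := field_env_vars k W d e G x x x ws.
have [ws0 _ /(holds_field_matrix d p_lt min_lt acs_lt') [_ [pS mG _ acsE _]]] := matrix 0.
have [EG _ _ _] := @field_env_vars k W d (comring_of HN) e G 0 0 0 ws0.
rewrite EG nat_poly_zp_min_digits in mG.
have [h [h_inj hD hM hE]] := zp_hom pS mG.
have h_surj (x : comring_of HN) : exists y, h y = x.
  have [ws Ex /(field_matrix_elem p_lt min_lt acs_lt') [cs]] := matrix x.
  have [EGx _ _ _] := @field_env_vars k W d (comring_of HN) e G x x x ws.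
  by rewrite Ex EGx -hE => ->; eexists.
have [h' h'K] := choice h_surj.
exists h, h'; split=> //.
- by move=> y; apply: h_inj; rewrite h'K.
- by apply: (addrI (h 0)); rewrite -hD !addr0.
- have h1 : h 1 = 1 by rewrite -(zeval1 g) hE zeval1.
  exact: h1.
- split=> // j.
  by rewrite aE hE -eE -(@field_env_lt k W d (comring_of HN) e G 0 0 0 ws0 j) ?acsE ?EG.
Qed.

End ZpFormula.

Close Scope ring_scope.

Theorem corollary4p2 :
  forall k : nat, exists c : nat,
    forall (F : finFieldType) (a : 'I_k -> field_str F),
      exists phi : lform,
        is_sigma 3 phi /\
        flen phi <= c * log2up #|F| /\
        describes a phi.
Proof.
move=> k; exists (2400 * (k + 1)) => F a.
have [P] := zpres_inhabited F.
have [acs acsP] := fin_all_exists (fun j => zp_digits_exist P (a j)).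
have acs_lt j : all (fun c => c < zp_char P) (acs j) by have [] := acsP j.
have aE j : a j = zeval (zp_gen P) (nat_poly (acs j)) by have [] := acsP j.
exists (zp_formula P acs); split; first exact: field_formula_sigma3.
split.
  apply: leq_trans (flen_field_formula _ _ _ _) _ => [|j|]; first exact: size_zp_min_digits.
    by have [] := acsP j.
  have := zp_size_bound P; nia.
split; first exact: fvars_field_formula.
by split; [exact: zp_formula_sat | move=> N b; exact: zp_formula_unique].
Qed.
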